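(* Let $\mathbf{S}=(1^{n_1},\ast^{m_1},\ldots,1^{n_r},\ast^{m_r})$ with $r\ge1$, all $n_j,m_j\ge1$ and $n_1+\cdots+n_r=m_1+\cdots+m_r=n$ (so $\mathbf{S}$ is a balanced string of length $2n$ with $r$ runs). Then \[ |NC_2(\mathbf{S})|\le\frac{r^{r-1}}{r!}(1+n)^{r-1}. \]
   Context: $1^k$ denotes $k$ consecutive entries $1$ (similarly $\ast^k$). $NC_2(\mathbf{S})$ is the set of non-crossing pairings of the $2n$ positions of $\mathbf{S}$ in which each pair joins a position carrying $1$ with a position carrying $\ast$. *)

From mathcomp Require Import all_boot all_order all_algebra.
Set Implicit Arguments. Unset Strict Implicit. Unset Printing Implicit Defensive.

(* A string over {1, *} is encoded as a seq bool: true = 1, false = *. *)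

Definition run_string (ns ms : seq nat) : seq bool :=
  flatten [seq nseq nm.1 true ++ nseq nm.2 false | nm <- zip ns ms].

(* A pairing is encoded as a fixed-point-free involution p of the positions
   (p i = partner of i). *)
Definition NC2 (S : seq bool) : {set {ffun 'I_(size S) -> 'I_(size S)}} :=
  [set p : {ffun 'I_(size S) -> 'I_(size S)} |
     [forall i, [&& p (p i) == i, p i != i &
                    nth false S i != nth false S (p i)]]
  && [forall a : 'I_(size S), forall b : 'I_(size S), ~~ [&& (a < b)%N, (b < p a)%N & (p a < p b)%N]]].

From mathcomp Require Import all_boot all_order all_algebra.
From mathcomp Require Import zify ring.
Set Implicit Arguments. Unset Strict Implicit. Unset Printing Implicit Defensive.

(* Every non-crossing pairing of a run string with r >= 2 runs of 1s has an ear: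
   a run of 1s, other than the first, whose partners all lie in the two adjacent
   runs of stars. Non-crossing forces the pairing on such a run to be a pair of
   nested reflections, determined by the number t of its 1s paired to the left,
   and cutting out the run with its partners leaves a run string with r - 1 runs
   of 1s. So |NC_2| is at most the number m + r - 2 of choices of (ear, t) times
   the bound for r - 1 runs, and r (m + r - 2) (r - 1)^(r - 2) <= r^(r - 1) (m + 1)
   for r <= m closes the induction on r. *)

(** * Non-crossing pairings *)

Definition nc_pairing (s : seq bool) (f : nat -> nat) : Prop :=
  (forall i, i < size s ->
     [/\ f i < size s, f (f i) = i & nth false s (f i) = ~~ nth false s i]) /\
  (forall a b, a < size s -> b < size s -> a < b -> b < f a -> f a < f b -> False).

Section Pairing.
Variables (s : seq bool) (f : nat -> nat).
Hypothesis pf : nc_pairing s f.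

Lemma pairing_lt i : i < size s -> f i < size s.
Proof. by case: pf => H _ /H []. Qed.

Lemma pairingK i : i < size s -> f (f i) = i.
Proof. by case: pf => H _ /H []. Qed.

Lemma pairing_flip i : i < size s -> nth false s (f i) = ~~ nth false s i.
Proof. by case: pf => H _ /H []. Qed.

Lemma pairing_noncross a b :
  a < size s -> b < size s -> a < b -> b < f a -> f a < f b -> False.
Proof. by case: pf => _; apply. Qed.

Lemma pairing_nested a y : a < size s -> a < f a -> a < y < f a -> a < f y < f a.
Proof.
move=> ha haf /andP[hay hyf].
have hy : y < size s by have := pairing_lt ha; lia.
have fyK := pairingK hy; have faK := pairingK ha.
have hfy : f y < f a.
  case: (ltngtP (f y) (f a)) => // [h|h]; first by case: (pairing_noncross ha hy hay hyf h).
  by move: (congr1 f h); rewrite fyK faK; lia.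
rewrite hfy andbT; case: (ltngtP a (f y)) => // [h|h].
- by case: (pairing_noncross (pairing_lt hy) ha h); rewrite fyK.
- by move: (congr1 f h); rewrite fyK; lia.
Qed.

End Pairing.

Definition rev_pairing (N : nat) (f : nat -> nat) (i : nat) := N - (f (N - i.+1)).+1.

Lemma rev_nc_pairing s f : nc_pairing s f -> nc_pairing (rev s) (rev_pairing (size s) f).
Proof.
move=> pf; rewrite /nc_pairing /rev_pairing size_rev; set N := size s; split.
- move=> i hi; have hi' : N - i.+1 < N by lia.
  have hf := pairing_lt pf hi'.
  rewrite !nth_rev -/N; try lia.
  have -> : N - (N - (f (N - i.+1)).+1).+1 = f (N - i.+1) by lia.
  by rewrite (pairingK pf hi') pairing_flip //; split; lia.
- move=> a b ha hb hab hba hfab.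
  have ha' : N - a.+1 < N by lia.
  have hb' : N - b.+1 < N by lia.
  have ka := pairingK pf ha'; have kb := pairingK pf hb'.
  have la := pairing_lt pf ha'; have lb := pairing_lt pf hb'.
  apply: (pairing_noncross pf lb la); rewrite ?ka ?kb; lia.
Qed.

(* Stated additively: it also shows that k < u. *)
Lemma pairing_left_nest s f u t L c : nc_pairing s f -> u + t <= size s ->
  (forall i, u - L <= i < u -> nth false s i = c) ->
  (forall k, k < t -> u - L <= f (u + k) < u) ->
  forall k, k < t -> f (u + k) + k.+1 = u.
Proof.
move=> pf ht ty rng; elim/ltn_ind => k IH hk.
have hik : u + k < size s by lia.
have /andP[hv1 hv2] := rng k hk; set v := f (u + k) in hv1 hv2 *.
have hvs : v < size s by lia.
have fv : f v = u + k by rewrite /v (pairingK pf hik).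
case: (ltngtP (v + k.+1) u) => // hc; exfalso.
- set y := u - k.+1.
  have /andP[hy1 hy2] : v < f y < f v by apply: (pairing_nested pf); rewrite ?fv //; lia.
  have hys : y < size s by lia.
  have tfy : nth false s (f y) = ~~ c by rewrite pairing_flip // ty //; lia.
  case: (ltnP (f y) u) => hfy; first by move: tfy; rewrite ty; [case: (c) | lia].
  have := IH (f y - u); rewrite (_ : u + (f y - u) = f y); last by lia.
  by rewrite (pairingK pf) //; lia.
- have e : f (u + (u - v.+1)) = v by have := IH (u - v.+1); lia.
  have := congr1 f e; rewrite fv (pairingK pf); lia.
Qed.

Lemma pairing_right_nest s f w t L c : nc_pairing s f -> w + L <= size s -> t <= w ->
  (forall i, w <= i < w + L -> nth false s i = c) ->
  (forall k, k < t -> w <= f (w - k.+1) < w + L) ->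
  forall k, k < t -> f (w - k.+1) = w + k.
Proof.
move=> pf hL ht ty rng k hk.
have E : forall k, size s - (size s - w + k).+1 = w - k.+1 by lia.
have key : size s - (f (w - k.+1)).+1 + k.+1 = size s - w.
  rewrite -E; apply: (pairing_left_nest (L := L) (c := c) (rev_nc_pairing pf)) hk.
  - by rewrite size_rev; lia.
  - by move=> i hi; rewrite nth_rev ?ty //; lia.
  - by move=> k' hk'; rewrite /rev_pairing E; have := rng k' hk'; lia.
have := pairing_lt pf (i := w - k.+1); lia.
Qed.

(** * Ears *)

(* The 1s at u, ..., u + t - 1 are paired by reflection in u - 1/2, the other 1s
   at u + t, ..., u + l - 1 by reflection in u + l - 1/2. *)
Definition ear_reflect (u l t i : nat) :=
  if i < u + t then u.*2.-1 - i else (u + l).*2.-1 - i.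

Section EarBlock.
Variables (s : seq bool) (f : nat -> nat) (u l L1 L2 : nat) (x : bool).
Hypothesis pf : nc_pairing s f.
Hypothesis hsz : u + l + L2 <= size s.
Hypothesis hL1 : L1 <= u.
Hypothesis ty_block : forall i, u <= i < u + l -> nth false s i = x.
Hypothesis ty_left : forall i, u - L1 <= i < u -> nth false s i = ~~ x.
Hypothesis ty_right : forall i, u + l <= i < u + l + L2 -> nth false s i = ~~ x.
Hypothesis partner_near : forall i, u <= i < u + l -> u - L1 <= f i < u + l + L2.

Lemma ear_partner_outside i : u <= i < u + l -> f i < u \/ u + l <= f i.
Proof.
move=> hi; have hs : i < size s by lia.
case: (ltnP (f i) u) => h1; [by left | case: (ltnP (f i) (u + l)) => h2; [| by right]].
by move: (pairing_flip pf hs); rewrite !ty_block //; [case: (x) | lia].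
Qed.

Lemma ear_left_prefix i i' : u <= i < i' -> i' < u + l -> f i' < u -> f i < u.
Proof.
move=> hii' hi' hfi'; case: (ear_partner_outside (i := i)) => // [|h]; first by lia.
have hs' : i' < size s by lia.
by case: (pairing_noncross pf (pairing_lt pf hs') (_ : i < size s));
  rewrite ?(pairingK pf hs'); lia.
Qed.

Lemma ear_split : exists2 t, t <= l &
  (forall k, k < t -> f (u + k) < u) /\ (forall k, t <= k < l -> u + l <= f (u + k)).
Proof.
pose P k := u <= f (u + k).
pose t := find P (iota 0 l).
have tl : t <= l by rewrite -[l in _ <= l](size_iota 0) find_size.
have before_t k : k < t -> f (u + k) < u.
  move=> hk; have := before_find 0 hk; rewrite nth_iota ?(leq_trans hk tl) //.
  by move/negbT; rewrite -ltnNge.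
have at_t : t < l -> u <= f (u + t).
  move=> htl; have hP : has P (iota 0 l) by rewrite has_find size_iota.
  by have := nth_find 0 hP; rewrite nth_iota.
clearbody t; exists t => //; split=> // k hk.
have hu : u <= f (u + k).
  case: (ltngtP t k) hk => [htk|//|<- /andP[_ /at_t] //] hk.
  rewrite leqNgt; apply/negP => /(ear_left_prefix (i := u + t)) h.
  by have := at_t; have := h; lia.
by case: (ear_partner_outside (i := u + k)); lia.
Qed.

Lemma ear_shape : exists t, [/\ t <= l, t <= L1, l - t <= L2 &
  forall i, u - t <= i < u + l + l - t -> f i = ear_reflect u l t i].
Proof.
have [t tl [before_t after_t]] := ear_split.
have left k : k < t -> f (u + k) + k.+1 = u.
  apply: (pairing_left_nest (L := L1) (c := ~~ x) pf) => //; first by lia.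
  by move=> k' hk'; have := partner_near (i := u + k'); have := before_t k' hk'; lia.
have right k : k < l - t -> f (u + l - k.+1) = u + l + k.
  apply: (pairing_right_nest (L := L2) (c := ~~ x) pf) => //; first by lia.
  move=> k' hk'; rewrite (_ : u + l - k'.+1 = u + (l - k'.+1)); last by lia.
  by have := partner_near (i := u + (l - k'.+1)); have := after_t (l - k'.+1); lia.
have tL1 : t <= L1.
  case: (posnP t) => [-> //|ht].
  by have := left t.-1; have := partner_near (i := u + t.-1); lia.
have tL2 : l - t <= L2.
  case: (ltnP t l) => htl; last by lia.
  have := right (l - t).-1; rewrite (_ : u + l - (l - t).-1.+1 = u + t); last by lia.
  by have := partner_near (i := u + t); lia.
exists t; split=> // i hi; rewrite /ear_reflect.
case: (ltnP i u) => [h1|h1].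
  have hs : u + (u - i.+1) < size s by lia.
  have e : f (u + (u - i.+1)) = i by have := left (u - i.+1); lia.
  by have := congr1 f e; rewrite (pairingK pf hs) ifT; lia.
case: (ltnP i (u + t)) => [h2|h2]; first by have := left (i - u); rewrite subnKC; lia.
case: (ltnP i (u + l)) => [h3|h3].
  by have := right (u + l - i.+1); rewrite (_ : u + l - (u + l - i.+1).+1 = i); lia.
have hs : u + l - (i - u - l).+1 < size s by lia.
have e : f (u + l - (i - u - l).+1) = i by have := right (i - u - l); lia.
by have := congr1 f e; rewrite (pairingK pf hs); lia.
Qed.

End EarBlock.

(** * Excision, and counting by covers *)

Definition open_gap (a b i : nat) := if i < a then i else i + (b - a).
Definition close_gap (a b j : nat) := if j < a then j else j - (b - a).

Section Gap.
Variables a b : nat.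
Hypothesis hab : a <= b.

Lemma open_gapK : cancel (open_gap a b) (close_gap a b).
Proof. by move=> i; rewrite /open_gap /close_gap; case: (ltnP i a) => h; case: ifP; lia. Qed.

Lemma close_gapK j : ~~ (a <= j < b) -> open_gap a b (close_gap a b j) = j.
Proof. by rewrite /open_gap /close_gap; case: (ltnP j a) => h /=; case: ifP; lia. Qed.

Lemma open_gap_outside i : ~~ (a <= open_gap a b i < b).
Proof. by rewrite /open_gap; case: ifP; lia. Qed.

Lemma ltn_open_gap i k : (open_gap a b i < open_gap a b k) = (i < k).
Proof. by rewrite /open_gap; case: (ltnP i a) => ?; case: (ltnP k a) => ?; lia. Qed.

End Gap.

Section Excise.
Variables (s : seq bool) (f : nat -> nat) (a b : nat).
Hypothesis pf : nc_pairing s f.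
Hypothesis hab : a <= b.
Hypothesis hb : b <= size s.
Hypothesis gap_closed : forall i, a <= i < b -> a <= f i < b.

Let s' := take a s ++ drop b s.

Lemma size_excise : size s' = size s - (b - a).
Proof. by rewrite /s' size_cat size_take size_drop; case: ifP; lia. Qed.

Lemma open_gap_lt i : (open_gap a b i < size s) = (i < size s').
Proof. by rewrite size_excise /open_gap; case: ifP; lia. Qed.

Lemma nth_excise i : i < size s' -> nth false s' i = nth false s (open_gap a b i).
Proof.
rewrite size_excise /s' /open_gap => hi.
rewrite nth_cat size_takel; last by lia.
by case: ifP => h; [rewrite nth_take | rewrite nth_drop; congr nth]; lia.
Qed.

Lemma pairing_outside_gap j : j < size s -> ~~ (a <= j < b) -> ~~ (a <= f j < b).
Proof. by move=> hj; apply: contra => /gap_closed; rewrite (pairingK pf hj). Qed.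

Let g i := close_gap a b (f (open_gap a b i)).

Lemma excise_nc_pairing : nc_pairing s' g.
Proof.
have out i : i < size s' -> ~~ (a <= f (open_gap a b i) < b).
  by move=> hi; apply: pairing_outside_gap (open_gap_outside hab i); rewrite open_gap_lt.
split.
- move=> i hi; have hi' : open_gap a b i < size s by rewrite open_gap_lt.
  have hgi : g i < size s' by rewrite -open_gap_lt /g close_gapK ?out ?(pairing_lt pf).
  rewrite /g close_gapK ?out // (pairingK pf hi') open_gapK //.
  by rewrite !nth_excise // /g close_gapK ?out // pairing_flip.
- move=> x y hx hy hxy hyg hgg.
  have hx' : open_gap a b x < size s by rewrite open_gap_lt.
  have hy' : open_gap a b y < size s by rewrite open_gap_lt.
  apply: (pairing_noncross pf hx' hy'); first by rewrite ltn_open_gap.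
  + by rewrite -(close_gapK hab (out x hx)) ltn_open_gap.
  + by rewrite -(close_gapK hab (out x hx)) -(close_gapK hab (out y hy)) ltn_open_gap.
Qed.

End Excise.

Definition glue (a b : nat) (h g : nat -> nat) (i : nat) :=
  if a <= i < b then h i else open_gap a b (g (close_gap a b i)).

Definition covers (s : seq bool) (P : (nat -> nat) -> Prop) (L : seq (nat -> nat)) :=
  forall f, nc_pairing s f -> P f ->
    exists2 g, List.In g L & forall i, i < size s -> f i = g i.

Lemma excise_cover s a b h L : a <= b -> b <= size s ->
  (forall i, a <= i < b -> a <= h i < b) ->
  covers (take a s ++ drop b s) (fun _ => True) L ->
  covers s (fun f => forall i, a <= i < b -> f i = h i) (map (glue a b h) L).
Proof.
move=> hab hb hh cov f pf fh.
have closed i : a <= i < b -> a <= f i < b by move=> hi; rewrite fh ?hh.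
have [g gL fg] := cov _ (excise_nc_pairing pf hab hb closed) I.
exists (glue a b h g); first exact: List.in_map.
move=> i hi; rewrite /glue; case: ifP => hin; first exact: fh.
have hout : ~~ (a <= i < b) by rewrite hin.
rewrite -fg; last by rewrite -(open_gap_lt hab hb) close_gapK.
by rewrite close_gapK // close_gapK // (pairing_outside_gap pf closed).
Qed.

Definition ffun_pairing N (p : {ffun 'I_N -> 'I_N}) (i : nat) : nat :=
  if insub i is Some o then val (p o) else i.

Lemma ffun_pairingE N (p : {ffun 'I_N -> 'I_N}) (o : 'I_N) : ffun_pairing p o = p o.
Proof. by rewrite /ffun_pairing valK. Qed.

Lemma NC2_nc_pairing s p : p \in NC2 s -> nc_pairing s (ffun_pairing p).
Proof.
rewrite inE => /andP[/forallP pair /forallP noncross]; split.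
- move=> i hi; rewrite -[i]/(val (Ordinal hi)) !ffun_pairingE.
  have /and3P[/eqP -> _ ty] := pair (Ordinal hi).
  by split=> //; move: ty; case: (nth _ _ _); case: (nth _ _ _).
- move=> x y hx hy hxy hyp hpp.
  move: hxy hyp hpp; rewrite -[x]/(val (Ordinal hx)) -[y]/(val (Ordinal hy)) !ffun_pairingE.
  move: (noncross (Ordinal hx)) => /forallP /(_ (Ordinal hy)) /negP nc h1 h2 h3.
  by apply: nc; rewrite h1 h2 h3.
Qed.

Lemma In_has T (P : pred T) x L : List.In x L -> P x -> has P L.
Proof. by elim: L => //= y L IH [-> ->|/IH h /h ->]; rewrite ?orbT. Qed.

Lemma card_NC2_le_cover s L : covers s (fun _ => True) L -> #|NC2 s| <= size L.
Proof.
move=> cov; pose T := {ffun 'I_(size s) -> 'I_(size s)}.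
pose agree (p : T) (g : nat -> nat) := [forall j : 'I_(size s), ffun_pairing p j == g j].
pose idx (p : T) := find (agree p) L.
have idxP p : p \in NC2 s -> idx p < size L /\ agree p (nth id L (idx p)).
  move=> /NC2_nc_pairing /cov /(_ I) [g gL fg].
  have hL : has (agree p) L by apply: In_has gL _; apply/forallP => j; rewrite fg.
  by rewrite /idx -has_find hL nth_find.
have idx_inj : {in NC2 s &, injective idx}.
  move=> p q /idxP[_ /forallP Pp] /idxP[_ /forallP Pq] e.
  apply/ffunP => j; apply: ord_inj; rewrite -!ffun_pairingE.
  by move: (Pp j) (Pq j); rewrite e => /eqP -> /eqP ->.
rewrite cardE -(size_map idx) -(size_iota 0 (size L)) uniq_leq_size //.
  by rewrite map_inj_in_uniq ?enum_uniq // => p q; rewrite !mem_enum; apply: idx_inj.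
by move=> k /mapP[p]; rewrite mem_enum => /idxP[hp _] ->; rewrite mem_iota.
Qed.

Lemma covers_cat s P Q L1 L2 :
  covers s P L1 -> covers s Q L2 -> covers s (fun f => P f \/ Q f) (L1 ++ L2).
Proof.
move=> c1 c2 f pf [/(c1 f pf)|/(c2 f pf)] [g gL fg]; exists g => //.
- exact: List.in_or_app (or_introl gL).
- exact: List.in_or_app (or_intror gL).
Qed.

Lemma covers_union (X : eqType) (I : seq X) (P : X -> (nat -> nat) -> Prop) s c B :
  (forall x, x \in I -> exists2 L, c * size L <= B & covers s (P x) L) ->
  (forall f, nc_pairing s f -> exists2 x, x \in I & P x f) ->
  exists2 L, c * size L <= size I * B & covers s (fun _ => True) L.
Proof.
move=> coverI cls.
suff [L hL cov] : exists2 L, c * size L <= size I * B &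
    covers s (fun f => exists2 x, x \in I & P x f) L.
  by exists L => // f pf _; apply: cov (cls f pf).
elim: I coverI {cls} => [|x I IH] coverI; first by exists [::]; rewrite ?muln0 // => f _ [].
have [L1 hL1 c1] := coverI x (mem_head _ _).
have [L2 hL2 c2] := IH (fun y hy => coverI y (@mem_behead _ (x :: I) y hy)).
exists (L1 ++ L2); first by rewrite size_cat /= mulnDr mulSn leq_add.
move=> f pf [y]; rewrite inE => /orP[/eqP ->|hy] Py; apply: (covers_cat c1 c2) => //.
- by left.
- by right; exists y.
Qed.

(** * Run strings *)

Fixpoint runs_from (b : bool) (lens : seq nat) : seq bool :=
  if lens is l :: lens' then nseq l b ++ runs_from (~~ b) lens' else [::].

Definition runs (lens : seq nat) := runs_from true lens.

Definition run_start (lens : seq nat) (k : nat) := sumn (take k lens).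

Fixpoint run_index (lens : seq nat) (i : nat) : nat :=
  if lens is l :: lens' then (if i < l then 0 else (run_index lens' (i - l)).+1) else 0.

Lemma size_runs lens : size (runs lens) = sumn lens.
Proof.
rewrite /runs; elim: lens true => //= l lens IH b.
by rewrite size_cat size_nseq IH.
Qed.

Lemma nth_runs lens i : i < sumn lens -> nth false (runs lens) i = ~~ odd (run_index lens i).
Proof.
rewrite /runs -[~~ _]/(true (+) odd (run_index lens i)).
elim: lens true i => //= l lens IH b i hi; rewrite nth_cat size_nseq.
case: ifP => h; first by rewrite nth_nseq h addbF.
by rewrite IH ?oddS; [case: b; case: (odd _) | lia].
Qed.

Lemma run_start_mono lens : {homo run_start lens : k k' / k <= k'}.
Proof. by move=> k k' h; rewrite /run_start -(subnKC h) takeD sumn_cat; lia. Qed.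

Lemma run_start_le lens k : run_start lens k <= sumn lens.
Proof. by rewrite /run_start -{2}(cat_take_drop k lens) sumn_cat leq_addr. Qed.

Lemma run_index_spec lens i : i < sumn lens ->
  run_index lens i < size lens /\
  run_start lens (run_index lens i) <= i < run_start lens (run_index lens i).+1.
Proof.
rewrite /run_start; elim: lens i => //= l lens IH i hi.
case: (ltnP i l) => h; first by rewrite /=; lia.
have [h1 /andP[h2 h3]] : _ /\ _ := IH (i - l) ltac:(lia).
by rewrite /=; split; lia.
Qed.

Lemma run_indexP lens i k : i < sumn lens ->
  (run_index lens i == k) = (run_start lens k <= i < run_start lens k.+1).
Proof.
move=> hi; have [_ /andP[h1 h2]] := run_index_spec hi.
apply/eqP/idP => [<-|/andP[h3 h4]]; first by rewrite h1.
case: (ltngtP (run_index lens i) k) => // [lt|gt].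
- by have := run_start_mono lens lt; lia.
- by have := run_start_mono lens gt; lia.
Qed.

Lemma nth_runs_start lens k i : run_start lens k <= i < run_start lens k.+1 ->
  nth false (runs lens) i = ~~ odd k.
Proof.
move=> hi; have hiN : i < sumn lens by have := run_start_le lens k.+1; lia.
by rewrite nth_runs // (eqP (_ : run_index lens i == k)) // run_indexP.
Qed.

(* Runs of even index are runs of 1s. *)
Definition is_ear (lens : seq nat) (f : nat -> nat) (e : nat) :=
  [&& ~~ odd e, 1 < e, e.+2 <= size lens &
      all (fun i => run_start lens e.-1 <= f i < run_start lens e.+2)
          (index_iota (run_start lens e) (run_start lens e.+1))].

Section EarExists.
Variables (lens : seq nat) (f : nat -> nat).
Hypothesis pf : nc_pairing (runs lens) f.

Definition long_arc a :=
  [&& a < sumn lens, a < f a & (run_index lens a).+2 <= run_index lens (f a)].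

Lemma runs_pairing_lt i : i < sumn lens -> f i < sumn lens.
Proof. by rewrite -size_runs; apply: pairing_lt. Qed.

Lemma runs_pairingK i : i < sumn lens -> f (f i) = i.
Proof. by rewrite -size_runs; apply: pairingK. Qed.

Lemma run_start_lt_sumn k i : i < run_start lens k -> i < sumn lens.
Proof. by have := run_start_le lens k; lia. Qed.

Lemma long_arc_escape e i : 1 < e -> run_start lens e <= i < run_start lens e.+1 ->
  ~~ (run_start lens e.-1 <= f i < run_start lens e.+2) -> long_arc i \/ long_arc (f i).
Proof.
move=> he hi hfi; have hiN := run_start_lt_sumn (k := e.+1) (i := i) ltac:(lia).
have hfN := runs_pairing_lt hiN.
have /eqP ri : run_index lens i == e by rewrite run_indexP.
have [_ /andP[lo hi']] := run_index_spec hfN.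
case: (ltnP (f i) (run_start lens e.+2)) => h2; [right | left];
  rewrite /long_arc ?runs_pairingK ?hiN ?hfN ?ri //=.
- have lt : run_index lens (f i) < e.-1.
    rewrite ltnNge; apply/negP => /(run_start_mono lens); lia.
  have := run_start_mono lens (_ : e.-1 <= e); lia.
- have ge : e.+2 <= run_index lens (f i).
    rewrite leqNgt; apply/negP => /(run_start_mono lens); lia.
  have := run_start_mono lens (leqnSn e.+1); lia.
Qed.

(* A long arc encloses a run of 1s of index at least 2 and its successor run;
   if that run is no ear, one of its arcs is again long, and shorter. *)
Lemma long_arc_ear d a : long_arc a -> f a - a <= d -> exists e, is_ear lens f e.
Proof.
elim/ltn_ind: d a => d IH a /and3P[ha haf hlong] hd.
have hfa := runs_pairing_lt ha.
have [besz /andP[bb _]] := run_index_spec hfa.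
have [_ /andP[_ ba]] := run_index_spec ha.
set al := run_index lens a in hlong ba; set be := run_index lens (f a) in hlong besz bb.
have parity : odd be = ~~ odd al.
  have := pairing_flip pf (i := a); rewrite size_runs => /(_ ha).
  by rewrite !nth_runs // => /negb_inj.
pose e := if odd al then al.+1 else al.+2.
have he : ~~ odd e by rewrite /e; case: ifP => /= ->.
have he1 : 1 < e by rewrite /e; case: ifP; [case: (al) => //= ?; lia | lia].
have hebe : e.+1 <= be.
  rewrite /e; case: ifP => odd_al; first by lia.
  have : be != al.+2 by apply/eqP => E; move: parity; rewrite E /= odd_al.
  by lia.
have start_e : run_start lens al.+1 <= run_start lens e.
  by apply: run_start_mono; rewrite /e; case: ifP.
have end_e := run_start_mono lens hebe.
case/boolP: (all (fun i => run_start lens e.-1 <= f i < run_start lens e.+2)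
          (index_iota (run_start lens e) (run_start lens e.+1))) => [all_e|/allPn[i]].
  by exists e; rewrite /is_ear he he1 all_e andbT; lia.
rewrite mem_index_iota => hi /(long_arc_escape he1 hi) escape.
have hiN : i < sumn lens by lia.
have /andP[hfi1 hfi2] :=
  pairing_nested pf (a := a) (y := i) ltac:(rewrite size_runs //) haf ltac:(lia).
case: escape => [long_i|long_fi].
- by apply: (IH (f i - i) _ i long_i) => //; lia.
- by apply: (IH (i - f i) _ (f i) long_fi); rewrite ?runs_pairingK //; lia.
Qed.

Lemma exists_ear : 3 < size lens -> exists e, is_ear lens f e.
Proof.
move=> hsz; case/boolP: (has long_arc (iota 0 (sumn lens))) => [/hasP[a _ /long_arc_ear]|].
  by apply; apply: leqnn.
move=> /hasPn no_long; exists 2; rewrite /is_ear hsz /=.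
apply/allP => i; rewrite mem_index_iota => hi.
apply/negPn/negP => /(long_arc_escape (isT : 1 < 2) hi).
have hiN : i < sumn lens by apply: (run_start_lt_sumn (k := 3)); lia.
by case=> /[dup] /and3P[h _ _]; apply/negP; apply: no_long; rewrite mem_iota.
Qed.

End EarExists.

Definition run_lengths (ps : seq (nat * nat)) := flatten [seq [:: x.1; x.2] | x <- ps].

Definition pair_runs (ps : seq (nat * nat)) :=
  flatten [seq nseq x.1 true ++ nseq x.2 false | x <- ps].

Lemma pair_runs_cat ps qs : pair_runs (ps ++ qs) = pair_runs ps ++ pair_runs qs.
Proof. by rewrite /pair_runs map_cat flatten_cat. Qed.

Lemma pair_runs_cons x ps :
  pair_runs (x :: ps) = nseq x.1 true ++ nseq x.2 false ++ pair_runs ps.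
Proof. by rewrite /pair_runs /= catA. Qed.

Lemma pair_runsE ps : pair_runs ps = runs (run_lengths ps).
Proof. by elim: ps => // x ps IH; rewrite pair_runs_cons IH. Qed.

Lemma size_run_lengths ps : size (run_lengths ps) = (size ps).*2.
Proof. by elim: ps => //= x ps IH; rewrite IH doubleS. Qed.

Lemma sumn_run_lengths ps : sumn (run_lengths ps) = size (pair_runs ps).
Proof. by rewrite pair_runsE size_runs. Qed.

Lemma run_start_cat l1 l2 k : run_start (l1 ++ l2) (size l1 + k) = sumn l1 + run_start l2 k.
Proof. by rewrite /run_start take_cat ltnNge leq_addr /= addKn sumn_cat. Qed.

Lemma run_start_ear P A B Q k : k <= 4 ->
  run_start (run_lengths (P ++ A :: B :: Q)) ((size P).*2 + k) =
  size (pair_runs P) + sumn (take k [:: A.1; A.2; B.1; B.2]).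
Proof.
move=> hk; rewrite /run_lengths map_cat flatten_cat -/(run_lengths P).
rewrite -size_run_lengths run_start_cat sumn_run_lengths; congr (_ + _).
by case: k hk => [|[|[|[|[|]]]]] // _; rewrite /run_start /= take0.
Qed.

Lemma ear_window_excise P A B Q t : t <= B.1 -> t <= A.2 -> B.1 - t <= B.2 ->
  take (size (pair_runs P) + A.1 + A.2 - t) (pair_runs (P ++ A :: B :: Q)) ++
  drop (size (pair_runs P) + A.1 + A.2 + B.1 + B.1 - t) (pair_runs (P ++ A :: B :: Q)) =
  pair_runs (P ++ (A.1, A.2 + B.2 - B.1) :: Q).
Proof.
move=> tB tA hB.
have splitA : nseq A.2 false = nseq (A.2 - t) false ++ nseq t false by rewrite -nseqD subnK.
have splitB : nseq B.2 false = nseq (B.1 - t) false ++ nseq (B.2 - (B.1 - t)) false.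
  by rewrite -nseqD subnKC.
rewrite !pair_runs_cat !pair_runs_cons splitA splitB /=.
set X := pair_runs P ++ nseq A.1 true ++ nseq (A.2 - t) false.
set Y := nseq t false ++ nseq B.1 true ++ nseq (B.1 - t) false.
set Z := nseq (B.2 - (B.1 - t)) false ++ pair_runs Q.
have -> : pair_runs P ++ nseq A.1 true ++ (nseq (A.2 - t) false ++ nseq t false) ++
  nseq B.1 true ++ (nseq (B.1 - t) false ++ nseq (B.2 - (B.1 - t)) false) ++ pair_runs Q =
  X ++ Y ++ Z by rewrite /X /Y /Z !catA.
have hX : size (pair_runs P) + A.1 + A.2 - t = size X by rewrite /X !size_cat !size_nseq; lia.
have hY : size (pair_runs P) + A.1 + A.2 + B.1 + B.1 - t = size X + size Y.
  by rewrite /Y /X !size_cat !size_nseq; lia.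
rewrite hX hY take_size_cat // catA drop_size_cat ?size_cat // /X /Z -!catA.
by congr (_ ++ _ ++ _); rewrite catA -nseqD; congr (nseq _ _ ++ _); lia.
Qed.

Lemma ear_reflect_window u l t i : t <= u -> t <= l -> u - t <= i < u + l + l - t ->
  u - t <= ear_reflect u l t i < u + l + l - t.
Proof. by rewrite /ear_reflect; case: ifP; lia. Qed.

(* [t] of the 1s of the run [B.1] starting at [u] are paired into the stars of
   [A], the other [B.1 - t] into the stars of [B]. *)
Definition ear_class (u : nat) (A B : nat * nat) (t : nat) (f : nat -> nat) : Prop :=
  [/\ t <= B.1, t <= A.2, B.1 - t <= B.2 &
      forall i, u - t <= i < u + B.1 + B.1 - t -> f i = ear_reflect u B.1 t i].

Lemma ear_class_cover P A B Q t L :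
  covers (pair_runs (P ++ (A.1, A.2 + B.2 - B.1) :: Q)) (fun _ => True) L ->
  exists2 L', size L' <= size L &
    covers (pair_runs (P ++ A :: B :: Q))
           (ear_class (size (pair_runs P) + A.1 + A.2) A B t) L'.
Proof.
move=> cov; case: (boolP [&& t <= B.1, t <= A.2 & B.1 - t <= B.2]) => [/and3P[tB tA hB]|bad].
  exists (map (glue (size (pair_runs P) + A.1 + A.2 - t)
                    (size (pair_runs P) + A.1 + A.2 + B.1 + B.1 - t)
                    (ear_reflect (size (pair_runs P) + A.1 + A.2) B.1 t)) L).
    by rewrite size_map.
  move=> f pf [_ _ _ window]; apply: (excise_cover _ _ _ _ pf window) => //.
  - by lia.
  - by rewrite pair_runs_cat !pair_runs_cons !size_cat !size_nseq; lia.
  - by move=> i hi; apply: ear_reflect_window => //; lia.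
  - by rewrite ear_window_excise.
by exists [::] => // f _ [tB tA hB _]; move: bad; rewrite tB tA hB.
Qed.

Lemma pairs_split ps j : j.+1 < size ps ->
  take j ps ++ nth (0, 0) ps j :: nth (0, 0) ps j.+1 :: drop j.+2 ps = ps.
Proof.
move=> hj; rewrite -[RHS](cat_take_drop j) (drop_nth (0, 0) (ltnW hj)).
by rewrite (drop_nth (0, 0) hj).
Qed.

Definition ear_pos (ps : seq (nat * nat)) (j : nat) :=
  size (pair_runs (take j ps)) + (nth (0, 0) ps j).1 + (nth (0, 0) ps j).2.

Lemma pairing_in_ear_class ps f : 1 < size ps -> nc_pairing (pair_runs ps) f ->
  exists j t, [/\ j.+1 < size ps, t <= (nth (0, 0) ps j.+1).1 &
    ear_class (ear_pos ps j) (nth (0, 0) ps j) (nth (0, 0) ps j.+1) t f].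
Proof.
rewrite pair_runsE => hr pf.
have [e /and4P[even_e e2 esz /allP near]] :
    exists e, is_ear (run_lengths ps) f e.
  by apply: exists_ear; rewrite ?size_run_lengths //; lia.
rewrite size_run_lengths in esz.
set j := e./2.-1.
have ee : e = j.*2 + 2 by rewrite /j -{1}(odd_double_half e) (negbTE even_e) add0n; lia.
have hj : j.+1 < size ps by lia.
set A := nth (0, 0) ps j; set B := nth (0, 0) ps j.+1.
have start k : k <= 4 -> run_start (run_lengths ps) (j.*2 + k) =
    size (pair_runs (take j ps)) + sumn (take k [:: A.1; A.2; B.1; B.2]).
  move=> hk; have := run_start_ear (take j ps) A B (drop j.+2 ps) hk.
  by rewrite pairs_split // size_takel //; lia.
have s1 := start 1 isT; have s2 := start 2 isT; have s3 := start 3 isT; have s4 := start 4 isT.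
rewrite /= ?addn0 in s1 s2 s3 s4.
have upos : ear_pos ps j = size (pair_runs (take j ps)) + A.1 + A.2 by [].
have size_ok : ear_pos ps j + B.1 + B.2 <= size (runs (run_lengths ps)).
  by have := run_start_le (run_lengths ps) (j.*2 + 4); rewrite s4 size_runs upos; lia.
have ty_block i : ear_pos ps j <= i < ear_pos ps j + B.1 ->
    nth false (runs (run_lengths ps)) i = true.
  by move=> hi; rewrite (@nth_runs_start _ (j.*2 + 2)) ?oddD ?odd_double // -addnS s2 s3; lia.
have ty_left i : ear_pos ps j - A.2 <= i < ear_pos ps j ->
    nth false (runs (run_lengths ps)) i = ~~ true.
  by move=> hi; rewrite (@nth_runs_start _ (j.*2 + 1)) ?oddD ?odd_double // -addnS s1 s2; lia.
have ty_right i : ear_pos ps j + B.1 <= i < ear_pos ps j + B.1 + B.2 ->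
    nth false (runs (run_lengths ps)) i = ~~ true.
  by move=> hi; rewrite (@nth_runs_start _ (j.*2 + 3)) ?oddD ?odd_double // -addnS s3 s4; lia.
have partner_near i : ear_pos ps j <= i < ear_pos ps j + B.1 ->
    ear_pos ps j - A.2 <= f i < ear_pos ps j + B.1 + B.2.
  move=> hi; have := near i; rewrite mem_index_iota ee.
  rewrite (_ : (j.*2 + 2).-1 = j.*2 + 1); last by lia.
  by rewrite -!addnS s1 s2 s3 s4; lia.
have [t [tB tA hB window]] :=
  ear_shape pf size_ok (leq_addl _ _) ty_block ty_left ty_right partner_near.
by exists j, t; split.
Qed.

Lemma covers_nseq_false n : covers (nseq n false) (fun _ => True) [:: id].
Proof.
case: n => [|n] f pf _; first by exists id; [left | case].
have h0 : 0 < size (nseq n.+1 false) by rewrite size_nseq.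
by have := pairing_flip pf h0; rewrite !nth_nseq !if_same.
Qed.

Lemma nth_nseq_cat (X Y : seq bool) n c i : size X <= i < size X + n ->
  nth false (X ++ nseq n c ++ Y) i = c.
Proof.
move=> /andP[h1 h2]; rewrite nth_cat ltnNge h1 /= nth_cat size_nseq.
have h : i - size X < n by lia.
by rewrite h nth_nseq h.
Qed.

(* A single pair (a, b) is an ear preceded by the empty pair (0, 0). *)
Lemma single_run_cover a b :
  exists2 L, size L <= 1 & covers (pair_runs [:: (a, b)]) (fun _ => True) L.
Proof.
have := @covers_nseq_false (b - a); rewrite -[nseq _ _]cats0 => cov.
have [L hL coverL] :=
  ear_class_cover (P := [::]) (A := (0, 0)) (B := (a, b)) (Q := [::]) 0 cov.
exists L => // f pf _; apply: coverL => //.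
have size_ok : 0 + a + b <= size (pair_runs [:: (a, b)]).
  by rewrite pair_runs_cons !size_cat !size_nseq /=; lia.
have ty_block i : 0 <= i < 0 + a -> nth false (pair_runs [:: (a, b)]) i = true.
  by move=> hi; rewrite pair_runs_cons -[nseq a true ++ _]cat0s nth_nseq_cat.
have ty_right i : 0 + a <= i < 0 + a + b -> nth false (pair_runs [:: (a, b)]) i = ~~ true.
  by move=> hi; rewrite pair_runs_cons nth_nseq_cat // size_nseq.
have near i : 0 <= i < 0 + a -> 0 - 0 <= f i < 0 + a + b.
  move=> hi; have := pairing_lt pf (i := i).
  by rewrite pair_runs_cons !size_cat !size_nseq /=; lia.
have ty_left i : 0 - 0 <= i < 0 -> nth false (pair_runs [:: (a, b)]) i = ~~ true by lia.
have [t [_ t0 hb window]] := ear_shape pf size_ok (leqnn 0) ty_block ty_left ty_right near.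
by move: t0 hb window; rewrite leqn0 => /eqP ->; split.
Qed.

Lemma expn_bernoulli a k : a ^ k.+1 + k.+1 * a ^ k <= a.+1 ^ k.+1.
Proof.
elim: k => [|k IH]; first by rewrite !expn1 expn0; lia.
rewrite [a ^ k.+2]expnS [a ^ k.+1]expnS [a.+1 ^ k.+2]expnS.
rewrite [a ^ k.+1]expnS in IH.
have := leq_mul (leqnn a.+1) IH; move: (a ^ k) (a.+1 ^ k.+1) => X Y; nia.
Qed.

Lemma double_expn_le r : 0 < r -> 2 * r ^ r <= r.+1 ^ r.
Proof.
case: r => // r _; have := expn_bernoulli r.+1 r; rewrite expnS.
by move: (_ * _) (r.+2 ^ r.+1) => X Y; lia.
Qed.

(** * Counting *)

Definition nc_bound (r m : nat) := r ^ r.-1 * m.+1 ^ r.-1.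

Lemma nc_bound_mono r : {homo nc_bound r : m m' / m <= m'}.
Proof.
move=> m m' h; rewrite /nc_bound leq_mul2l.
case: (r.-1) => [|e]; first by rewrite !expn0 orbT.
by rewrite leq_exp2r // ltnS h orbT.
Qed.

Lemma nc_bound_step r m k : 1 < r -> r <= m -> k <= m + r - 2 ->
  r * (k * nc_bound r.-1 m) <= nc_bound r m.
Proof.
case: r => [|[|r]] // _ hm hk; rewrite /nc_bound /=.
have := double_expn_le (isT : 0 < r.+1).
rewrite [m.+1 ^ r.+1]expnS [r.+1 ^ r.+1]expnS.
have : r.+2 * k <= 2 * r.+1 * m.+1.
  by have := leq_mul (leqnn r.+2) hk; have := leq_mul (leqnn r) hm; nia.
move: (r.+1 ^ r) (r.+2 ^ r.+1) (m.+1 ^ r) => X Y Z h1 h2.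
rewrite (_ : r.+2 * (k * (X * Z)) = r.+2 * k * (X * Z)); last by ring.
apply: leq_trans (leq_mul h1 (leqnn (X * Z))) _.
rewrite (_ : 2 * r.+1 * m.+1 * (X * Z) = 2 * (r.+1 * X) * (m.+1 * Z)); last by ring.
exact: leq_mul h2 (leqnn _).
Qed.

Definition ear_index (ps : seq (nat * nat)) :=
  [seq (j, t) | j <- iota 0 (size ps).-1, t <- iota 0 (nth (0, 0) ps j.+1).1.+1].

Lemma size_ear_index ps : size (ear_index ps) = sumn (unzip1 (behead ps)) + (size ps).-1.
Proof.
case: ps => // x ps; rewrite /ear_index size_allpairs_dep /=.
under eq_map do rewrite size_iota.
have -> : [seq (nth (0, 0) ps j).1.+1 | j <- iota 0 (size ps)] = [seq y.1.+1 | y <- ps].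
  by rewrite -[in RHS](mkseq_nth (0, 0) ps) /mkseq -map_comp.
by elim: ps {x} => //= y ps ->; lia.
Qed.

Lemma size_le_sumn_unzip1 (ps : seq (nat * nat)) :
  all (fun x => 0 < x.1) ps -> size ps <= sumn (unzip1 ps).
Proof. by elim: ps => //= x ps IH /andP[hx /IH]; lia. Qed.

Section CoverStep.
Variable ps : seq (nat * nat).
Hypothesis hr : 1 < size ps.
Hypothesis pos : all (fun x => 0 < x.1) ps.
Hypothesis IH : forall qs, size qs < size ps -> all (fun x => 0 < x.1) qs ->
  exists2 L, (size qs)`! * size L <= nc_bound (size qs) (sumn (unzip1 qs)) &
    covers (pair_runs qs) (fun _ => True) L.

Lemma ear_class_bound j t : j.+1 < size ps ->
  exists2 L, (size ps).-1`! * size L <= nc_bound (size ps).-1 (sumn (unzip1 ps)) &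
    covers (pair_runs ps)
           (ear_class (ear_pos ps j) (nth (0, 0) ps j) (nth (0, 0) ps j.+1) t) L.
Proof.
move=> hj; have E := pairs_split hj; rewrite /ear_pos.
set P := take j ps in E *; set A := nth (0, 0) ps j in E *; set B := nth (0, 0) ps j.+1 in E *.
set Q := drop j.+2 ps in E.
set qs := P ++ (A.1, A.2 + B.2 - B.1) :: Q.
have size_qs : size qs = (size ps).-1 by rewrite -E !size_cat /=; lia.
have lt_qs : size qs < size ps by lia.
have sum_qs : sumn (unzip1 qs) <= sumn (unzip1 ps).
  by rewrite -E /unzip1 !map_cat !sumn_cat /=; lia.
have pos_qs : all (fun x => 0 < x.1) qs.
  by move: pos; rewrite -E !all_cat /= => /and3P[-> -> /andP[_ ->]].
have [L hL cov] := IH lt_qs pos_qs.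
have [L' hL' cov'] := ear_class_cover t cov.
exists L'; last by rewrite -E.
apply: leq_trans (nc_bound_mono _ sum_qs); rewrite -size_qs.
exact: leq_trans (leq_mul (leqnn _) hL') hL.
Qed.

Lemma cover_step : exists2 L, (size ps)`! * size L <= nc_bound (size ps) (sumn (unzip1 ps)) &
  covers (pair_runs ps) (fun _ => True) L.
Proof.
pose cls x := ear_class (ear_pos ps x.1) (nth (0, 0) ps x.1) (nth (0, 0) ps x.1.+1) x.2.
have cover_cls x : x \in ear_index ps ->
    exists2 L, (size ps).-1`! * size L <= nc_bound (size ps).-1 (sumn (unzip1 ps)) &
      covers (pair_runs ps) (cls x) L.
  case: x => j t /allpairsPdep[j' [t' [hj _ [-> ->]]]]; rewrite mem_iota in hj.
  by apply: ear_class_bound => /=; lia.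
have in_cls f : nc_pairing (pair_runs ps) f -> exists2 x, x \in ear_index ps & cls x f.
  move=> pf; have [j [t [hj ht cls_f]]] := pairing_in_ear_class hr pf.
  by exists (j, t) => //; apply/allpairsPdep; exists j, t; rewrite !mem_iota; split=> //; lia.
have [L hL cov] := covers_union cover_cls in_cls.
exists L => //; rewrite -(prednK (ltnW hr)) factS -mulnA prednK ?(ltnW hr) //.
apply: leq_trans (leq_mul (leqnn _) hL) _; apply: nc_bound_step => //.
- exact: size_le_sumn_unzip1.
- by rewrite size_ear_index; case: ps hr pos => // x qs _ /andP[hx _] /=; lia.
Qed.

End CoverStep.

Lemma pair_runs_cover ps : all (fun x => 0 < x.1) ps ->
  exists2 L, (size ps)`! * size L <= nc_bound (size ps) (sumn (unzip1 ps)) &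
    covers (pair_runs ps) (fun _ => True) L.
Proof.
move: {2}(size ps).+1 (ltnSn (size ps)) => n; elim: n ps => // n IHn ps hsz pos.
case: ps hsz pos => [|[a b] [|y qs]] hsz pos.
- by exists [:: id]; last exact: (@covers_nseq_false 0).
- have [L hL cov] := single_run_cover a b.
  by exists L; rewrite // /nc_bound !expn0 factS fact0; lia.
- by apply: cover_step => // qs' hqs' pos'; apply: IHn => //; move: hsz hqs' => /=; lia.
Qed.

Import GRing.Theory Num.Theory.
Local Open Scope ring_scope.

Theorem corollary3p6 (ns ms : seq nat) (n : nat) :
  (0 < size ns)%N ->
  size ms = size ns ->
  all (fun k => 0 < k)%N ns ->
  all (fun k => 0 < k)%N ms ->
  sumn ns = n ->
  sumn ms = n ->
  (#|NC2 (run_string ns ms)|%:R : rat)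
    <= ((size ns) ^ (size ns).-1)%:R / ((size ns)`!)%:R
       * (1 + n)%:R ^+ (size ns).-1.
Proof.
move=> _ size_ms pos_ns _ sum_ns _.
have unzip_ns : unzip1 (zip ns ms) = ns by rewrite unzip1_zip // size_ms.
have size_zip : size (zip ns ms) = size ns by rewrite size1_zip // size_ms.
have pos : all (fun x => 0 < x.1)%N (zip ns ms) by move: pos_ns; rewrite -{1}unzip_ns all_map.
have [L bound cover] := pair_runs_cover pos.
have card_le : (#|NC2 (run_string ns ms)| <= size L)%N := card_NC2_le_cover cover.
rewrite size_zip unzip_ns sum_ns in bound.
rewrite mulrAC ler_pdivlMr ?ltr0n ?fact_gt0 // -natrX -!natrM ler_nat add1n mulnC.
exact: leq_trans (leq_mul (leqnn _) card_le) bound.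
Qed.
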